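(* Let $X$ be a separable Fréchet space and $p$ a non-trivial continuous seminorm on $X$. Then for every dense countable set $A\subseteq X$ there is $B\subseteq A$ such that $B$ is $p$-independent and dense in $X$.
   Context: A Fréchet space is a complete metrizable locally convex (Hausdorff) space over $\mathbb{K}\in\{\mathbb{R},\mathbb{C}\}$. For a seminorm $p$, $\ker p=\{x:p(x)=0\}$; $p$ is non-trivial if $X/\ker p$ is infinite dimensional. A set $A\subseteq X$ is $p$-independent if $p(z_1a_1+\dots+z_na_n)\neq0$ for every $n\in\mathbb{N}$, pairwise distinct $a_1,\dots,a_n\in A$ and nonzero $z_1,\dots,z_n\in\mathbb{K}$. *)

From Stdlib Require Import Reals.
Open Scope R_scope.
Set Implicit Arguments.

Record Scalars := {
  sc :> Type;
  s0 : sc;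
  s1 : sc;
  sadd : sc -> sc -> sc;
  smul : sc -> sc -> sc;
  sopp : sc -> sc;
  sabs : sc -> R
}.

Definition RK : Scalars :=
  {| sc := R; s0 := 0; s1 := 1; sadd := Rplus; smul := Rmult; sopp := Ropp;
     sabs := Rabs |}.

Definition Cplx : Type := (R * R)%type.
Definition Cadd (z w : Cplx) : Cplx := (fst z + fst w, snd z + snd w).
Definition Cmul (z w : Cplx) : Cplx :=
  (fst z * fst w - snd z * snd w, fst z * snd w + snd z * fst w).
Definition Copp (z : Cplx) : Cplx := (- fst z, - snd z).
Definition Cmod (z : Cplx) : R := sqrt (fst z * fst z + snd z * snd z).

Definition CK : Scalars :=
  {| sc := Cplx; s0 := (0, 0); s1 := (1, 0); sadd := Cadd; smul := Cmul;
     sopp := Copp; sabs := Cmod |}.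

Record VectorSpace (K : Scalars) := {
  vcar :> Type;
  vzero : vcar;
  vadd : vcar -> vcar -> vcar;
  vopp : vcar -> vcar;
  vscal : sc K -> vcar -> vcar;
  vaddA : forall x y z, vadd x (vadd y z) = vadd (vadd x y) z;
  vaddC : forall x y, vadd x y = vadd y x;
  vadd0 : forall x, vadd x vzero = x;
  vaddN : forall x, vadd x (vopp x) = vzero;
  vscal1 : forall x, vscal (s1 K) x = x;
  vscalA : forall a b x, vscal a (vscal b x) = vscal (smul K a b) x;
  vscalDv : forall a x y, vscal a (vadd x y) = vadd (vscal a x) (vscal a y);
  vscalDs : forall a b x, vscal (sadd K a b) x = vadd (vscal a x) (vscal b x)
}.

Arguments vzero {K} v.
Arguments vadd {K v}.
Arguments vopp {K v}.
Arguments vscal {K v}.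

Section Defs.
Variable K : Scalars.
Variable X : VectorSpace K.

Definition vsub (x y : X) : X := vadd x (vopp y).

Fixpoint vsum (n : nat) (f : nat -> X) : X :=
  match n with
  | O => vzero X
  | S m => vadd (vsum m f) (f m)
  end.

Definition is_seminorm (p : X -> R) : Prop :=
  (forall x y, p (vadd x y) <= p x + p y) /\
  (forall (a : sc K) x, p (vscal a x) = sabs K a * p x).

Definition is_open (q : nat -> X -> R) (U : X -> Prop) : Prop :=
  forall x, U x -> exists n eps, 0 < eps /\
    forall y, (forall k, (k <= n)%nat -> q k (vsub y x) < eps) -> U y.

Definition dense (q : nat -> X -> R) (B : X -> Prop) : Prop :=
  forall U, is_open q U -> (exists x, U x) -> exists b, B b /\ U b.

Definition countable (D : X -> Prop) : Prop :=
  exists f : nat -> X, forall x, D x -> exists n, f n = x.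

Definition separable (q : nat -> X -> R) : Prop :=
  exists D, countable D /\ dense q D.

Definition is_frechet (q : nat -> X -> R) : Prop :=
  (forall n, is_seminorm (q n)) /\
  (forall x, (forall n, q n x = 0) -> x = vzero X) /\
  (forall u : nat -> X,
     (forall n eps, 0 < eps -> exists N, forall i j, (N <= i)%nat -> (N <= j)%nat ->
        q n (vsub (u i) (u j)) < eps) ->
     exists x, forall n eps, 0 < eps -> exists N, forall i, (N <= i)%nat ->
        q n (vsub (u i) x) < eps).

Definition continuous_fun (q : nat -> X -> R) (p : X -> R) : Prop :=
  forall x eps, 0 < eps -> exists n delta, 0 < delta /\
    forall y, (forall k, (k <= n)%nat -> q k (vsub y x) < delta) ->
      Rabs (p y - p x) < eps.

(** X / ker p infinite dimensional: for every n there are n vectors whose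
    classes in X / ker p are linearly independent. *)
Definition nontrivial (p : X -> R) : Prop :=
  forall n, exists a : nat -> X, forall z : nat -> sc K,
    p (vsum n (fun i => vscal (z i) (a i))) = 0 ->
    forall i, (i < n)%nat -> z i = s0 K.

Definition p_independent (p : X -> R) (B : X -> Prop) : Prop :=
  forall (n : nat) (a : nat -> X) (z : nat -> sc K),
    (1 <= n)%nat ->
    (forall i, (i < n)%nat -> B (a i)) ->
    (forall i j, (i < n)%nat -> (j < n)%nat -> i <> j -> a i <> a j) ->
    (forall i, (i < n)%nat -> z i <> s0 K) ->
    p (vsum n (fun i => vscal (z i) (a i))) <> 0.

End Defs.

Arguments vsub {K X}.
Arguments vsum {K X}.
Arguments is_seminorm {K X}.
Arguments is_open {K X}.
Arguments dense {K X}.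
Arguments countable {K X}.
Arguments separable {K} X.
Arguments is_frechet {K X}.
Arguments continuous_fun {K X}.
Arguments nontrivial {K X}.
Arguments p_independent {K X}.

(** Write [S_k(b)] for span(b_0,…,b_(k-1)) + ker p.
    - Linear algebra: k+1 vectors of K^k are dependent; hence, since
      X / ker p is infinite dimensional, no S_k(b) is all of X.
    - Analysis: S_k(b) is p-closed.  This is where the completeness of K enters,
      through the property [k_bounded_min] below, a form of the
      Heine–Borel theorem for K.
    - Hence in every nonempty open set U there is a point at positive p-distance
      from S_k(b); as p is continuous and A is dense, U meets A outside S_k(b).
    - Enumerate a countable base V_0, V_1, … of nonempty open sets (balls around
      the points of A) and choose recursively b_k ∈ A ∩ V_k outside S_k(b).
      The set {b_k} is dense since it meets every V_k, and p-independent since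
      in a vanishing combination the term of largest index would lie in the
      S_k(b) of its index. *)

From Stdlib Require Import Reals Lra Lia Classical IndefiniteDescription Cantor.
Open Scope R_scope.

Arguments vaddA {K v}. Arguments vaddC {K v}. Arguments vadd0 {K v}.
Arguments vaddN {K v}. Arguments vscal1 {K v}. Arguments vscalA {K v}.
Arguments vscalDv {K v}. Arguments vscalDs {K v}.

Lemma nonneg_inf_exists (E : R -> Prop) : (exists x, E x) -> (forall x, E x -> 0 <= x) ->
  exists m, (forall x, E x -> m <= x) /\
            (forall eps, 0 < eps -> exists x, E x /\ x < m + eps) /\ 0 <= m.
Proof.
  intros [x0 Hx0] Hpos.
  destruct (completeness (fun y => E (- y))) as [l [Hub Hlub]].
  { exists 0. intros y Hy. apply Hpos in Hy. lra. }
  { exists (- x0). rewrite Ropp_involutive. auto. }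
  exists (- l). split; [|split].
  - intros x Hx. assert (- x <= l) by (apply Hub; rewrite Ropp_involutive; auto). lra.
  - intros eps He. apply NNPP. intro Hn.
    assert (l <= l - eps); [|lra].
    apply Hlub. intros y Hy. destruct (Rle_dec y (l - eps)) as [|Hne]; auto.
    exfalso. apply Hn. exists (- y). split; auto. lra.
  - assert (l <= 0); [|lra]. apply Hlub. intros y Hy. apply Hpos in Hy. lra.
Qed.

Lemma finite_min_pos (g : nat -> R) n : (forall j, (j <= n)%nat -> 0 < g j) ->
  exists r, 0 < r /\ forall j, (j <= n)%nat -> r <= g j.
Proof.
  induction n; intro Hpos.
  - exists (g 0%nat). split; [apply Hpos; lia|]. intros j Hj.
    replace j with 0%nat by lia. lra.
  - destruct IHn as [r [Hr Hmin]]; [intros; apply Hpos; lia|].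
    exists (Rmin r (g (S n))). split; [apply Rmin_pos; auto; apply Hpos; lia|].
    intros j Hj. destruct (Nat.eq_dec j (S n)) as [->|Hne]; [apply Rmin_r|].
    eapply Rle_trans; [apply Rmin_l | apply Hmin; lia].
Qed.

Lemma exists_max_index (s : nat -> nat) n : (1 <= n)%nat ->
  exists i0, (i0 < n)%nat /\ forall i, (i < n)%nat -> (s i <= s i0)%nat.
Proof.
  induction n; intro Hn; [lia|].
  destruct (Nat.eq_dec n 0) as [->|Hn0].
  { exists 0%nat. split; [lia|]. intros i Hi. replace i with 0%nat by lia. lia. }
  destruct IHn as [i0 [Hi0 Hm]]; [lia|].
  destruct (Nat.le_gt_cases (s n) (s i0)).
  - exists i0. split; [lia|]. intros i Hi.
    destruct (Nat.eq_dec i n) as [->|]; auto. apply Hm. lia.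
  - exists n. split; [lia|]. intros i Hi.
    destruct (Nat.eq_dec i n) as [->|]; auto. specialize (Hm i ltac:(lia)). lia.
Qed.

Lemma recursive_choice {T : Type} (t0 : T) (P : nat -> (nat -> T) -> T -> Prop) :
  (forall k g g' a, (forall i, (i < k)%nat -> g i = g' i) -> P k g a -> P k g' a) ->
  (forall k g, exists a, P k g a) ->
  exists s : nat -> T, forall k, P k s (s k).
Proof.
  intros Hloc Hnext.
  destruct (functional_choice (fun kg a => P (fst kg) (snd kg) a)) as [pick Hpick].
  { intros [k g]. apply Hnext. }
  pose (hist := fix hist (k : nat) : nat -> T := match k with
          | O => fun _ => t0
          | S k' => fun i => if Nat.eqb i k' then pick (k', hist k') else hist k' i end).
  exists (fun i => pick (i, hist i)).
  assert (Hhist : forall k i, (i < k)%nat -> hist k i = pick (i, hist i)).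
  { induction k; intros i Hi; [lia|]. simpl. destruct (Nat.eqb i k) eqn:E.
    - apply Nat.eqb_eq in E. subst. reflexivity.
    - apply Nat.eqb_neq in E. apply IHk. lia. }
  intro k. apply (Hloc k (hist k)); [exact (Hhist k) | exact (Hpick (k, hist k))].
Qed.

(** The algebraic and metric structure of the scalars that the proof needs:
    a field with an absolute value, nonnegative reals embedded isometrically,
    and the Heine–Borel property in the following form: a nonnegative Lipschitz
    function taking arbitrarily small values on a bounded set has a zero. *)
Set Implicit Arguments.
Record ScalarField (K : Scalars) : Type := {
  kinv : sc K -> sc K;
  kofR : R -> sc K;
  k_addC : forall a b, sadd K a b = sadd K b a;
  k_addA : forall a b c, sadd K a (sadd K b c) = sadd K (sadd K a b) c;
  k_add0 : forall a, sadd K (s0 K) a = a;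
  k_addN : forall a, sadd K a (sopp K a) = s0 K;
  k_mulC : forall a b, smul K a b = smul K b a;
  k_mulA : forall a b c, smul K a (smul K b c) = smul K (smul K a b) c;
  k_mul1 : forall a, smul K (s1 K) a = a;
  k_mulDl : forall a b c, smul K (sadd K a b) c = sadd K (smul K a c) (smul K b c);
  k_one_neq0 : s1 K <> s0 K;
  k_mulV : forall a, a <> s0 K -> smul K a (kinv a) = s1 K;
  k_abs0 : sabs K (s0 K) = 0;
  k_abs_eq0 : forall a, sabs K a = 0 -> a = s0 K;
  k_abs_ge0 : forall a, 0 <= sabs K a;
  k_abs_mul : forall a b, sabs K (smul K a b) = sabs K a * sabs K b;
  k_abs_opp : forall a, sabs K (sopp K a) = sabs K a;
  k_abs1 : sabs K (s1 K) = 1;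
  k_abs_ofR : forall r, 0 <= r -> sabs K (kofR r) = r;
  k_bounded_min : forall (D : sc K -> R) (L M : R),
     (forall t, 0 <= D t) ->
     (forall t t', D t <= D t' + L * sabs K (sadd K t (sopp K t'))) ->
     (forall eps, 0 < eps -> exists t, sabs K t <= M /\ D t < eps) ->
     exists t, D t <= 0
}.
Unset Implicit Arguments.

Section Development.
Variable K : Scalars.
Variable KF : ScalarField K.

Definition scalar_ring : ring_theory (s0 K) (s1 K) (sadd K) (smul K)
  (fun a b => sadd K a (sopp K b)) (sopp K) eq.
Proof.
  constructor; intros; try reflexivity.
  - apply (k_add0 KF).
  - apply (k_addC KF).
  - apply (k_addA KF).
  - apply (k_mul1 KF).
  - apply (k_mulC KF).
  - apply (k_mulA KF).
  - apply (k_mulDl KF).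
  - apply (k_addN KF).
Qed.
Add Ring scalar_ring : scalar_ring.

Lemma k_mul_neq0 a b : a <> s0 K -> b <> s0 K -> smul K a b <> s0 K.
Proof.
  intros Ha Hb Hab. apply Hb.
  transitivity (smul K (smul K (kinv KF a) a) b).
  - rewrite (k_mulC KF (kinv KF a)), (k_mulV KF Ha). ring.
  - rewrite <- (k_mulA KF), Hab. ring.
Qed.

Fixpoint ssum (n : nat) (f : nat -> sc K) : sc K :=
  match n with O => s0 K | S m => sadd K (ssum m f) (f m) end.

Lemma ssum_S n f : ssum (S n) f = sadd K (ssum n f) (f n).
Proof. reflexivity. Qed.

Lemma ssum_ext n f g : (forall i, (i < n)%nat -> f i = g i) -> ssum n f = ssum n g.
Proof.
  induction n; intros H; simpl; auto.
  rewrite IHn by (intros; apply H; lia). rewrite H by lia. auto.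
Qed.

Lemma ssum_add n f g : ssum n (fun i => sadd K (f i) (g i)) = sadd K (ssum n f) (ssum n g).
Proof. induction n; simpl. ring. rewrite IHn. ring. Qed.

Lemma ssum_scal a n f : smul K a (ssum n f) = ssum n (fun i => smul K a (f i)).
Proof. induction n; simpl. ring. rewrite <- IHn. ring. Qed.

Lemma ssum_zero n f : (forall i, (i < n)%nat -> f i = s0 K) -> ssum n f = s0 K.
Proof.
  induction n; intros H; simpl; auto.
  rewrite IHn by (intros; apply H; lia). rewrite H by lia. ring.
Qed.

Lemma ssum_single n j0 c : (j0 < n)%nat ->
  ssum n (fun j => if Nat.eqb j j0 then c else s0 K) = c.
Proof.
  induction n; intros H; [lia|]. simpl.
  destruct (Nat.eqb n j0) eqn:E.
  - apply Nat.eqb_eq in E. subst. rewrite ssum_zero. ring.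
    intros i Hi. destruct (Nat.eqb i j0) eqn:E2; auto. apply Nat.eqb_eq in E2; lia.
  - apply Nat.eqb_neq in E. rewrite IHn by lia. ring.
Qed.

(** The vectors are the rows
    [m j] (j ≤ k), with coordinates [m j i] (i < k); [dependence k m z] says
    that z is a nontrivial vanishing combination of them. *)
Definition dependence (k : nat) (m : nat -> nat -> sc K) (z : nat -> sc K) :=
  (exists j, (j <= k)%nat /\ z j <> s0 K) /\
  (forall i, (i < k)%nat -> ssum (S k) (fun j => smul K (z j) (m j i)) = s0 K).

Definition all_dependent (k : nat) := forall m, exists z, dependence k m z.

(** If the last coordinate vanishes on all rows, a dependence of the first
    k+1 rows in K^k is one of all k+2 rows in K^(k+1). *)
Lemma dependence_zero_column k m : all_dependent k ->
  (forall j, (j <= S k)%nat -> m j k = s0 K) -> exists z, dependence (S k) m z.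
Proof.
  intros IH Hcol. destruct (IH m) as [z [[j [Hj Hz]] Hs]].
  exists (fun j => if Nat.eqb j (S k) then s0 K else z j). split.
  - exists j. split; [lia|]. destruct (Nat.eqb j (S k)) eqn:E; auto.
    apply Nat.eqb_eq in E; lia.
  - intros i Hi. rewrite (ssum_S (S k)); cbv beta. rewrite Nat.eqb_refl.
    rewrite (ssum_ext (S k) _ (fun j => smul K (z j) (m j i))).
    + assert (Hik : (i < k)%nat \/ i = k) by lia. destruct Hik as [Hik | ->].
      * rewrite (Hs i Hik). ring.
      * rewrite ssum_zero. ring. intros j' Hj'. rewrite Hcol by lia. ring.
    + intros j' Hj'. destruct (Nat.eqb j' (S k)) eqn:E; auto. apply Nat.eqb_eq in E; lia.
Qed.

(** Gaussian elimination step: with a nonzero pivot [m (S k) k], eliminate the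
    last coordinate from the other rows and apply the dependence in K^k. *)
Lemma dependence_pivot k m : all_dependent k ->
  m (S k) k <> s0 K -> exists z, dependence (S k) m z.
Proof.
  intros IH Hp.
  destruct (IH (fun j i => sadd K (smul K (m (S k) k) (m j i))
                               (sopp K (smul K (m j k) (m (S k) i)))))
    as [w [[j [Hj Hw]] Hs]].
  exists (fun j => if Nat.eqb j (S k)
                   then sopp K (ssum (S k) (fun j => smul K (w j) (m j k)))
                   else smul K (m (S k) k) (w j)).
  split.
  - exists j. split; [lia|]. destruct (Nat.eqb j (S k)) eqn:E.
    + apply Nat.eqb_eq in E; lia.
    + apply k_mul_neq0; auto.
  - intros i Hi. rewrite (ssum_S (S k)); cbv beta. rewrite Nat.eqb_refl.
    rewrite (ssum_ext (S k) _ (fun j => smul K (m (S k) k) (smul K (w j) (m j i)))).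
    2:{ intros j' Hj'. destruct (Nat.eqb j' (S k)) eqn:E.
        apply Nat.eqb_eq in E; lia. ring. }
    rewrite <- ssum_scal.
    assert (Hik : (i < k)%nat \/ i = k) by lia. destruct Hik as [Hik | ->]; [|ring].
    specialize (Hs i Hik).
    rewrite (ssum_ext (S k) _ (fun j => sadd K (smul K (m (S k) k) (smul K (w j) (m j i)))
               (smul K (sopp K (m (S k) i)) (smul K (w j) (m j k))))) in Hs by (intros; ring).
    rewrite ssum_add, <- !ssum_scal in Hs.
    etransitivity; [|exact Hs]. ring.
Qed.

(** Adding row j0 to row k+1 preserves dependence; this moves a nonzero
    entry of the last column to the pivot position. *)
Lemma dependence_row_add k m j0 z : (j0 <= k)%nat ->
  dependence (S k) (fun j i => if Nat.eqb j (S k) then sadd K (m (S k) i) (m j0 i) else m j i) z ->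
  exists z', dependence (S k) m z'.
Proof.
  intros Hj0 [[j [Hj Hz]] Hs].
  exists (fun j => if Nat.eqb j (S k) then z (S k)
                   else sadd K (z j) (if Nat.eqb j j0 then z (S k) else s0 K)).
  split.
  - destruct (classic (z (S k) = s0 K)) as [Hzs|Hzs].
    + exists j. assert (j <> S k) by (intro; subst; auto).
      split; [lia|]. destruct (Nat.eqb j (S k)) eqn:E. apply Nat.eqb_eq in E; lia.
      destruct (Nat.eqb j j0); rewrite ?Hzs; intro C; apply Hz; rewrite <- C; ring.
    + exists (S k). rewrite Nat.eqb_refl. auto.
  - intros i Hi. etransitivity; [|exact (Hs i Hi)]. rewrite !(ssum_S (S k)); cbv beta. rewrite !Nat.eqb_refl.
    rewrite (ssum_ext (S k) (fun j => smul K (if Nat.eqb j (S k) then _ else _) _)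
               (fun j => sadd K (smul K (z j) (m j i))
                            (if Nat.eqb j j0 then smul K (z (S k)) (m j0 i) else s0 K))).
    2:{ intros j' Hj'. destruct (Nat.eqb j' (S k)) eqn:E. apply Nat.eqb_eq in E; lia.
        destruct (Nat.eqb j' j0) eqn:E2. apply Nat.eqb_eq in E2; subst; ring. ring. }
    rewrite ssum_add, ssum_single by lia.
    rewrite (ssum_ext (S k) (fun j => smul K (z j) (if Nat.eqb j (S k) then _ else _))
               (fun j => smul K (z j) (m j i))).
    2:{ intros j' Hj'. destruct (Nat.eqb j' (S k)) eqn:E. apply Nat.eqb_eq in E; lia. auto. }
    ring.
Qed.

(** By induction on k: zero last column, nonzero pivot, or a pivot moved
    into place by a row addition. *)
Lemma rows_dependent k : all_dependent k.
Proof.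
  induction k; intro m.
  - exists (fun _ => s1 K). split.
    + exists 0%nat. split; auto. apply (k_one_neq0 KF).
    + intros; lia.
  - destruct (classic (forall j, (j <= S k)%nat -> m j k = s0 K)) as [Hcol|Hcol].
    { apply dependence_zero_column; auto. }
    destruct (classic (m (S k) k = s0 K)) as [Hpiv|Hpiv].
    2:{ apply dependence_pivot; auto. }
    assert (Hj0 : exists j0, (j0 <= k)%nat /\ m j0 k <> s0 K).
    { apply NNPP. intro Hn. apply Hcol. intros j Hj.
      destruct (Nat.eq_dec j (S k)) as [->|Hne]; auto.
      apply NNPP. intro Hm. apply Hn. exists j. split; auto. lia. }
    destruct Hj0 as [j0 [Hj0 Hm0]].
    destruct (dependence_pivot k
                (fun j i => if Nat.eqb j (S k) then sadd K (m (S k) i) (m j0 i) else m j i) IHk)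
      as [z Hz].
    { rewrite Nat.eqb_refl, Hpiv, (k_add0 KF). auto. }
    exact (dependence_row_add k m j0 z Hj0 Hz).
Qed.

Variable X : VectorSpace K.

Lemma v_add0l (x : X) : vadd (vzero X) x = x.
Proof. rewrite vaddC. apply vadd0. Qed.

Lemma v_cancel (x y z : X) : vadd x y = vadd x z -> y = z.
Proof.
  intro H.
  assert (H2 : vadd (vopp x) (vadd x y) = vadd (vopp x) (vadd x z)) by (rewrite H; auto).
  rewrite !vaddA, (vaddC (vopp x) x), vaddN, !v_add0l in H2. exact H2.
Qed.

Lemma v_scal0 (x : X) : vscal (s0 K) x = vzero X.
Proof.
  apply (v_cancel (vscal (s0 K) x)). rewrite vadd0, <- vscalDs. f_equal. ring.
Qed.

Lemma v_scalz (a : sc K) : vscal a (vzero X) = vzero X.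
Proof.
  apply (v_cancel (vscal a (vzero X))). rewrite vadd0, <- vscalDv, vadd0. auto.
Qed.

Lemma v_opp_unique (x y : X) : vadd x y = vzero X -> y = vopp x.
Proof. intro H. apply (v_cancel x). rewrite H, vaddN. auto. Qed.

Lemma v_scal_opp (a : sc K) (x : X) : vscal (sopp K a) x = vopp (vscal a x).
Proof.
  apply v_opp_unique. rewrite <- vscalDs.
  replace (sadd K a (sopp K a)) with (s0 K) by ring. apply v_scal0.
Qed.

Lemma v_opp_scal (x : X) : vopp x = vscal (sopp K (s1 K)) x.
Proof. rewrite v_scal_opp, vscal1. auto. Qed.

Lemma v_opp_add (x y : X) : vopp (vadd x y) = vadd (vopp x) (vopp y).
Proof. rewrite !v_opp_scal. apply vscalDv. Qed.

Lemma v_opp_opp (x : X) : vopp (vopp x) = x.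
Proof. symmetry. apply v_opp_unique. rewrite vaddC. apply vaddN. Qed.

Lemma v_add4 (a b c d : X) : vadd (vadd a b) (vadd c d) = vadd (vadd a c) (vadd b d).
Proof. rewrite <- !vaddA. f_equal. rewrite !vaddA. f_equal. apply vaddC. Qed.

Lemma v_subv (x : X) : vsub x x = vzero X.
Proof. apply vaddN. Qed.

Lemma v_sub0 (x : X) : vsub x (vzero X) = x.
Proof. unfold vsub. rewrite v_opp_scal, v_scalz. apply vadd0. Qed.

Lemma v_sub_scal (a : sc K) (x y : X) : vscal a (vsub x y) = vsub (vscal a x) (vscal a y).
Proof. unfold vsub. rewrite vscalDv, !v_opp_scal, !vscalA. f_equal. f_equal. ring. Qed.

Lemma v_scal_sub (a b : sc K) (x : X) :
  vscal (sadd K a (sopp K b)) x = vsub (vscal a x) (vscal b x).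
Proof. rewrite vscalDs, v_scal_opp. auto. Qed.

Lemma v_add_sub (x y : X) : vsub (vadd x y) x = y.
Proof. unfold vsub. rewrite vaddC, vaddA, (vaddC (vopp x)), vaddN. apply v_add0l. Qed.

Lemma v_sub_add (x y z : X) : vsub x (vadd y z) = vsub (vsub x y) z.
Proof. unfold vsub. rewrite v_opp_add. apply vaddA. Qed.

Lemma v_sub_swap (x y z : X) : vsub (vsub x y) z = vsub (vsub x z) y.
Proof. unfold vsub. rewrite <- !vaddA, (vaddC (vopp y)). auto. Qed.

Lemma v_sub_opp (x y : X) : vsub x y = vopp (vsub y x).
Proof. unfold vsub. rewrite v_opp_add, v_opp_opp, vaddC. auto. Qed.

Lemma v_sub_mid (x y z : X) : vsub x z = vadd (vsub x y) (vsub y z).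
Proof.
  unfold vsub. rewrite <- vaddA. f_equal.
  rewrite vaddA, (vaddC (vopp y)), vaddN, v_add0l. auto.
Qed.

Lemma v_sub_addK (x y : X) : vadd (vsub x y) y = x.
Proof. unfold vsub. rewrite <- vaddA, (vaddC (vopp y)), vaddN. apply vadd0. Qed.

Lemma v_sub_sub_cancel (x y z : X) : vsub (vsub x y) (vsub x z) = vsub z y.
Proof.
  unfold vsub. rewrite v_opp_add, v_opp_opp, v_add4, vaddN, v_add0l. apply vaddC.
Qed.

Lemma v_sub_subK (x y : X) : vsub x (vsub x y) = y.
Proof. rewrite <- (v_sub0 x) at 1. rewrite v_sub_sub_cancel. apply v_sub0. Qed.

Lemma v_shift_sub (x w u u' : X) :
  vsub (vsub (vadd x w) u) (vsub x u') = vadd w (vsub u' u).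
Proof.
  unfold vsub. rewrite v_opp_add, v_opp_opp, v_add4, (vaddC x w), <- (vaddA w x), vaddN,
    vadd0, (vaddC (vopp u)). reflexivity.
Qed.

Lemma vsum_ext (n : nat) (f g : nat -> X) :
  (forall i, (i < n)%nat -> f i = g i) -> vsum n f = vsum n g.
Proof.
  induction n; intros H; simpl; auto.
  rewrite IHn by (intros; apply H; lia). rewrite H by lia. auto.
Qed.

Lemma vsum_add (n : nat) (f g : nat -> X) :
  vsum n (fun i => vadd (f i) (g i)) = vadd (vsum n f) (vsum n g).
Proof. induction n; simpl. { rewrite vadd0; auto. } rewrite IHn. apply v_add4. Qed.

Lemma vsum_scal (a : sc K) (n : nat) (f : nat -> X) :
  vscal a (vsum n f) = vsum n (fun i => vscal a (f i)).
Proof. induction n; simpl. { apply v_scalz. } rewrite vscalDv, IHn. auto. Qed.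

Lemma vsum_zero (n : nat) (f : nat -> X) :
  (forall i, (i < n)%nat -> f i = vzero X) -> vsum n f = vzero X.
Proof.
  induction n; intros H; simpl; auto.
  rewrite IHn, H by (auto; intros; apply H; lia). apply vadd0.
Qed.

Lemma vsum_swap (n k : nat) (g : nat -> nat -> X) :
  vsum n (fun j => vsum k (fun i => g j i)) = vsum k (fun i => vsum n (fun j => g j i)).
Proof.
  induction n; simpl. { symmetry. apply vsum_zero. auto. }
  rewrite IHn, <- vsum_add. auto.
Qed.

Lemma vsum_single (n j0 : nat) (w : X) : (j0 < n)%nat ->
  vsum n (fun j => if Nat.eqb j j0 then w else vzero X) = w.
Proof.
  induction n; intros H; [lia|]. simpl.
  destruct (Nat.eqb n j0) eqn:E.
  - apply Nat.eqb_eq in E. subst. rewrite vsum_zero. apply v_add0l.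
    intros i Hi. destruct (Nat.eqb i j0) eqn:E2; auto. apply Nat.eqb_eq in E2; lia.
  - apply Nat.eqb_neq in E. rewrite IHn by lia. apply vadd0.
Qed.

Lemma vscal_ssum n f (x : X) : vscal (ssum n f) x = vsum n (fun j => vscal (f j) x).
Proof. induction n; simpl. apply v_scal0. rewrite vscalDs, IHn. auto. Qed.

Definition lc (k : nat) (c : nat -> sc K) (b : nat -> X) : X :=
  vsum k (fun i => vscal (c i) (b i)).

Lemma lc_S k c b : lc (S k) c b = vadd (lc k c b) (vscal (c k) (b k)).
Proof. reflexivity. Qed.

Lemma lc_ext k c d b b' :
  (forall i, (i < k)%nat -> c i = d i /\ b i = b' i) -> lc k c b = lc k d b'.
Proof. intro H. unfold lc. apply vsum_ext. intros i Hi. destruct (H i Hi) as [-> ->]. auto. Qed.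

Lemma lc_add k c d b : lc k (fun i => sadd K (c i) (d i)) b = vadd (lc k c b) (lc k d b).
Proof. unfold lc. rewrite <- vsum_add. apply vsum_ext. intros. apply vscalDs. Qed.

Lemma lc_scal a k c b : vscal a (lc k c b) = lc k (fun i => smul K a (c i)) b.
Proof. unfold lc. rewrite vsum_scal. apply vsum_ext. intros. apply vscalA. Qed.

Lemma lc_opp k c b : lc k (fun i => sopp K (c i)) b = vopp (lc k c b).
Proof. rewrite v_opp_scal, lc_scal. apply lc_ext. intros. split; auto. ring. Qed.

Lemma lc_sub k c d b :
  lc k (fun i => sadd K (c i) (sopp K (d i))) b = vsub (lc k c b) (lc k d b).
Proof. rewrite lc_add, lc_opp. auto. Qed.

Lemma lc_single k j w (b : nat -> X) : (j < k)%nat ->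
  lc k (fun i => if Nat.eqb i j then w else s0 K) b = vscal w (b j).
Proof.
  intro Hj. unfold lc. rewrite <- (vsum_single k j (vscal w (b j)) Hj). apply vsum_ext.
  intros i Hi. destruct (Nat.eqb i j) eqn:E.
  - apply Nat.eqb_eq in E. subst. auto.
  - apply v_scal0.
Qed.

Lemma lc_drop_last k c t (b : nat -> X) :
  lc (S k) (fun i => if Nat.eqb i k then t else c i) b = vadd (lc k c b) (vscal t (b k)).
Proof.
  rewrite lc_S, Nat.eqb_refl. f_equal. apply lc_ext. intros i Hi. split; auto.
  destruct (Nat.eqb i k) eqn:E; auto. apply Nat.eqb_eq in E. lia.
Qed.

Lemma lc_collect (b : nat -> X) k n (g : nat -> X) :
  (forall i, (i < n)%nat -> g i = vzero X \/ exists w j, (j < k)%nat /\ g i = vscal w (b j)) ->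
  exists c, vsum n g = lc k c b.
Proof.
  induction n; intro H.
  - exists (fun _ => s0 K). symmetry. apply vsum_zero. intros. apply v_scal0.
  - destruct IHn as [c Hc]; [intros; apply H; lia|]. simpl. rewrite Hc.
    destruct (H n (Nat.lt_succ_diag_r n)) as [E | [w [j [Hj E]]]]; rewrite E.
    + exists c. apply vadd0.
    + exists (fun i => sadd K (c i) (if Nat.eqb i j then w else s0 K)).
      rewrite lc_add, lc_single; auto.
Qed.

Lemma scal_add_lc k (b : nat -> X) v s c : s <> s0 K ->
  vadd (vscal s v) (lc k c b) =
  vscal s (vsub v (lc k (fun i => sopp K (smul K (kinv KF s) (c i))) b)).
Proof.
  intro Hs. symmetry. rewrite v_sub_scal, lc_scal.
  rewrite (lc_ext k _ (fun i => sopp K (c i)) b b).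
  - rewrite lc_opp. unfold vsub. rewrite v_opp_opp. auto.
  - intros i Hi. split; auto.
    transitivity (sopp K (smul K (smul K s (kinv KF s)) (c i))). ring.
    rewrite (k_mulV KF Hs). ring.
Qed.

Section Seminorm.
Variable s : X -> R.
Hypothesis Hs : is_seminorm s.

Lemma sn_tri x y : s (vadd x y) <= s x + s y.
Proof. apply (proj1 Hs). Qed.

Lemma sn_scal a x : s (vscal a x) = sabs K a * s x.
Proof. apply (proj2 Hs). Qed.

Lemma sn_zero : s (vzero X) = 0.
Proof. rewrite <- (v_scal0 (vzero X)), sn_scal, (k_abs0 KF). ring. Qed.

Lemma sn_opp x : s (vopp x) = s x.
Proof. rewrite v_opp_scal, sn_scal, (k_abs_opp KF), (k_abs1 KF). ring. Qed.

Lemma sn_ge0 x : 0 <= s x.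
Proof. pose proof (sn_tri x (vopp x)). rewrite vaddN, sn_zero, sn_opp in H. lra. Qed.

Lemma sn_sym x y : s (vsub x y) = s (vsub y x).
Proof. rewrite v_sub_opp, sn_opp. auto. Qed.

Lemma sn_mid x y z : s (vsub x z) <= s (vsub x y) + s (vsub y z).
Proof. rewrite (v_sub_mid x y z). apply sn_tri. Qed.

Lemma sn_sub x y : s (vsub x y) <= s x + s y.
Proof. unfold vsub. rewrite <- (sn_opp y). apply sn_tri. Qed.

Lemma sn_vsum_zero n f : (forall i, (i < n)%nat -> s (f i) = 0) -> s (vsum n f) = 0.
Proof.
  induction n; intro H; simpl. { apply sn_zero. }
  pose proof (sn_tri (vsum n f) (f n)). rewrite IHn, H in H0 by (auto; intros; apply H; lia).
  pose proof (sn_ge0 (vadd (vsum n f) (f n))). lra.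
Qed.

End Seminorm.

Variable p : X -> R.
Hypothesis Hp : is_seminorm p.

(** [in_pspan k b y]: y ∈ S_k(b) = span(b_0,…,b_(k-1)) + ker p. *)
Definition in_pspan k b y := exists c, p (vsub y (lc k c b)) = 0.

Definition near_pspan k b y := forall eps, 0 < eps -> exists c, p (vsub y (lc k c b)) < eps.

(** As X / ker p is infinite dimensional, S_k(b) ≠ X: otherwise the
    coordinates of k+1 vectors independent modulo ker p would be dependent. *)
Lemma pspan_proper (Hnt : nontrivial p) k b : exists v, ~ in_pspan k b v.
Proof.
  apply NNPP. intro Hall.
  assert (Hcoord : forall v, exists c, p (vsub v (lc k c b)) = 0).
  { intro v. apply NNPP. intro Hv. apply Hall. exists v. exact Hv. }
  destruct (functional_choice _ Hcoord) as [m Hm].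
  destruct (Hnt (S k)) as [a Ha].
  destruct (rows_dependent k (fun j i => m (a j) i)) as [z [[j [Hj Hz]] Hs]].
  apply Hz. apply (Ha z); [|lia].
  assert (Hcomb : vsum (S k) (fun j => vscal (z j) (lc k (m (a j)) b)) = vzero X).
  { transitivity (vsum (S k) (fun j => vsum k (fun i => vscal (smul K (z j) (m (a j) i)) (b i)))).
    { apply vsum_ext. intros. unfold lc. rewrite vsum_scal. apply vsum_ext.
      intros. apply vscalA. }
    rewrite vsum_swap. apply vsum_zero. intros i Hi.
    rewrite <- vscal_ssum, (Hs i Hi). apply v_scal0. }
  replace (vsum (S k) (fun i => vscal (z i) (a i))) with
    (vadd (vsum (S k) (fun j => vscal (z j) (vsub (a j) (lc k (m (a j)) b))))
          (vsum (S k) (fun j => vscal (z j) (lc k (m (a j)) b)))).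
  - rewrite Hcomb, vadd0. apply (sn_vsum_zero p Hp). intros.
    rewrite (sn_scal p Hp), Hm. ring.
  - rewrite <- vsum_add. apply vsum_ext. intros. rewrite <- vscalDv, v_sub_addK. auto.
Qed.

Lemma pspan_gap k b y : ~ near_pspan k b y ->
  exists gam, 0 < gam /\ forall c, gam <= p (vsub y (lc k c b)).
Proof.
  intro Hfar. apply NNPP. intro Hn. apply Hfar. intros eps He.
  apply NNPP. intro Hn2. apply Hn. exists eps. split; auto.
  intro c. apply Rnot_lt_le. intro Hl. apply Hn2. exists c. auto.
Qed.

Lemma pspan_gap_scal k b v delta : (forall c, delta <= p (vsub v (lc k c b))) ->
  forall s c, sabs K s * delta <= p (vadd (vscal s v) (lc k c b)).
Proof.
  intros Hd s c. destruct (classic (s = s0 K)) as [Hz|Hz].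
  - subst. rewrite (k_abs0 KF), Rmult_0_l. apply (sn_ge0 p Hp).
  - rewrite (scal_add_lc k b v s c Hz), (sn_scal p Hp).
    apply Rmult_le_compat_l; [apply (k_abs_ge0 KF) | apply Hd].
Qed.

Definition is_pdist k b y d :=
  (forall c, d <= p (vsub y (lc k c b))) /\
  (forall eps, 0 < eps -> exists c, p (vsub y (lc k c b)) < d + eps).

Lemma pdist_exists k b y : exists d, 0 <= d /\ is_pdist k b y d.
Proof.
  destruct (nonneg_inf_exists (fun r => exists c, r = p (vsub y (lc k c b))))
    as [d [Hlow [Happ Hd0]]].
  - exists (p (vsub y (lc k (fun _ => s0 K) b))). eauto.
  - intros r [c ->]. apply (sn_ge0 p Hp).
  - exists d. repeat split; auto.
    + intro c. apply Hlow. eauto.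
    + intros eps He. destruct (Happ eps He) as [r [[c ->] Hr]]. eauto.
Qed.

Lemma pdist_lipschitz k b y y' d d' : is_pdist k b y d -> is_pdist k b y' d' ->
  d <= d' + p (vsub y y').
Proof.
  intros [Hlow _] [_ Happ]. apply Rnot_lt_le. intro Hlt.
  destruct (Happ (d - d' - p (vsub y y'))) as [c Hc]; [lra|].
  pose proof (Hlow c). pose proof (sn_mid p Hp y y' (lc k c b)). lra.
Qed.

Lemma near_of_pdist k b y d : is_pdist k b y d -> d <= 0 -> near_pspan k b y.
Proof.
  intros [_ Happ] Hd eps He. destruct (Happ eps He) as [c Hc]. exists c. lra.
Qed.

Lemma in_pspan_S k b y t : in_pspan k b (vsub y (vscal t (b k))) -> in_pspan (S k) b y.
Proof.
  intros [c Hc]. exists (fun i => if Nat.eqb i k then t else c i).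
  rewrite lc_drop_last, v_sub_add, v_sub_swap. exact Hc.
Qed.

Lemma near_pspan_absorb k b y :
  in_pspan k b (b k) -> near_pspan (S k) b y -> near_pspan k b y.
Proof.
  intros [e He] Hy eps Heps. destruct (Hy eps Heps) as [c Hc].
  exists (fun i => sadd K (c i) (smul K (c k) (e i))).
  rewrite lc_add, <- lc_scal.
  replace (vsub y (vadd (lc k c b) (vscal (c k) (lc k e b))))
    with (vadd (vsub y (lc (S k) c b)) (vscal (c k) (vsub (b k) (lc k e b)))).
  - eapply Rle_lt_trans. apply (sn_tri p Hp). rewrite (sn_scal p Hp), He. lra.
  - rewrite lc_S, !v_sub_add, v_sub_scal. symmetry. apply v_sub_mid.
Qed.

(** If b_k is at distance δ > 0 from S_k(b)
    and y is in the closure of S_(k+1)(b), then t ↦ dist(y - t b_k, S_k(b))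
    is Lipschitz and takes arbitrarily small values at parameters with
    |t| ≤ (1 + p y)/δ; by the Heine–Borel property of K it vanishes at some t,
    i.e. y - t b_k is in the closure of S_k(b). *)
Lemma pspan_closed_step k b y :
  ~ near_pspan k b (b k) -> near_pspan (S k) b y ->
  exists t, near_pspan k b (vsub y (vscal t (b k))).
Proof.
  intros Hfar Hy. destruct (pspan_gap k b (b k) Hfar) as [delta [Hdel Hd]].
  destruct (functional_choice _ (fun t => pdist_exists k b (vsub y (vscal t (b k)))))
    as [D HD].
  destruct (@k_bounded_min K KF D (p (b k)) ((1 + p y) / delta)) as [t Ht].
  - intro t. apply HD.
  - intros t t'. eapply Rle_trans.
    { apply (pdist_lipschitz k b _ _ _ _ (proj2 (HD t)) (proj2 (HD t'))). }
    rewrite v_sub_sub_cancel, <- v_scal_sub, (sn_scal p Hp).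
    replace (sadd K t' (sopp K t)) with (sopp K (sadd K t (sopp K t'))) by ring.
    rewrite (k_abs_opp KF). lra.
  - intros eps Heps. destruct (Hy (Rmin eps 1)) as [c Hc]. { apply Rmin_pos; lra. }
    pose proof (Rmin_l eps 1). pose proof (Rmin_r eps 1).
    exists (c k). split.
    + assert (Hcoef : sabs K (c k) * delta <= p y + 1).
      { eapply Rle_trans. apply (pspan_gap_scal k b (b k) delta Hd (c k) c).
        rewrite vaddC, <- lc_S, <- (v_sub_subK y (lc (S k) c b)).
        pose proof (sn_sub p Hp y (vsub y (lc (S k) c b))). lra. }
      apply (Rmult_le_reg_r delta); auto.
      unfold Rdiv. rewrite Rmult_assoc, Rinv_l, Rmult_1_r by lra. lra.
    + destruct (HD (c k)) as [_ [Hlow _]]. eapply Rle_lt_trans. apply (Hlow c).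
      rewrite v_sub_swap, <- v_sub_add, <- lc_S. lra.
  - exists t. apply (near_of_pdist k b _ (D t)); [apply HD | exact Ht].
Qed.

Lemma pspan_closed k b y : near_pspan k b y -> in_pspan k b y.
Proof.
  revert y. induction k; intros y Hy.
  - exists (fun _ => s0 K). pose proof (sn_ge0 p Hp (vsub y (lc 0 (fun _ => s0 K) b))).
    apply Rle_antisym; auto. apply Rnot_lt_le. intro Hpos.
    destruct (Hy _ Hpos) as [c Hc]. exact (Rlt_irrefl _ Hc).
  - destruct (classic (near_pspan k b (b k))) as [Hnear|Hfar].
    + apply (in_pspan_S k b y (s0 K)). rewrite v_scal0, v_sub0.
      apply IHk, near_pspan_absorb; auto.
    + destruct (pspan_closed_step k b y Hfar Hy) as [t Ht].
      apply (in_pspan_S k b y t), IHk, Ht.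
Qed.

Variable q : nat -> X -> R.
Hypothesis Hq : forall n, is_seminorm (q n).

Definition ball n x eps : X -> Prop :=
  fun y => forall k, (k <= n)%nat -> q k (vsub y x) < eps.

Lemma ball_open n x eps : is_open q (ball n x eps).
Proof.
  intros y Hy.
  destruct (finite_min_pos (fun k => eps - q k (vsub y x)) n) as [r [Hr Hmin]].
  { intros k Hk. specialize (Hy k Hk). lra. }
  exists n, r. split; auto. intros z Hz k Hk.
  pose proof (sn_mid (q k) (Hq k) z y x). specialize (Hz k Hk). specialize (Hmin k Hk). lra.
Qed.

Lemma ball_center n x eps : 0 < eps -> ball n x eps x.
Proof. intros He k Hk. rewrite v_subv, (sn_zero (q k) (Hq k)). auto. Qed.

Lemma open_shift U x v : is_open q U -> U x ->
  exists t, 0 < t /\ U (vadd x (vscal (kofR KF t) v)).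
Proof.
  intros HU Hx. destruct (HU x Hx) as [n [eps [Heps Hball]]].
  destruct (finite_min_pos (fun j => eps / (q j v + 1)) n) as [t [Ht Hmin]].
  { intros j _. pose proof (sn_ge0 (q j) (Hq j) v). apply Rdiv_lt_0_compat; lra. }
  exists t. split; auto. apply Hball. intros j Hj.
  rewrite v_add_sub, (sn_scal (q j) (Hq j)), (k_abs_ofR KF) by lra.
  specialize (Hmin j Hj). pose proof (sn_ge0 (q j) (Hq j) v).
  apply (Rmult_le_compat_r (q j v + 1)) in Hmin; [|lra].
  unfold Rdiv in Hmin. rewrite Rmult_assoc, Rinv_l, Rmult_1_r in Hmin by lra. nra.
Qed.

(** Every nonempty open set contains a point at positive p-distance from
    S_k(b): either any of its points, or one pushed off in the direction of
    a vector v ∉ S_k(b), which is at positive distance since S_k(b) is closed. *)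
Lemma open_far_point (Hnt : nontrivial p) k b U : is_open q U -> (exists x, U x) ->
  exists y gam, U y /\ 0 < gam /\ forall c, gam <= p (vsub y (lc k c b)).
Proof.
  intros HU [x Hx].
  destruct (classic (near_pspan k b x)) as [Hnear|Hfar].
  2:{ destruct (pspan_gap k b x Hfar) as [gam Hgam]. exists x, gam. auto. }
  destruct (pspan_proper Hnt k b) as [v Hv].
  assert (Hvfar : ~ near_pspan k b v) by (intro Hn; apply Hv, pspan_closed, Hn).
  destruct (pspan_gap k b v Hvfar) as [delta [Hdel Hd]].
  destruct (open_shift U x v HU Hx) as [t [Ht HUy]].
  assert (Htd : 0 < t * delta) by (apply Rmult_lt_0_compat; lra).
  exists (vadd x (vscal (kofR KF t) v)), (t * delta / 2). split; [|split]; auto; [lra|].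
  intro c. destruct (Hnear (t * delta / 2)) as [c' Hc']; [lra|].
  pose proof (pspan_gap_scal k b v delta Hd (kofR KF t)
                 (fun i => sadd K (c' i) (sopp K (c i)))) as Hlow.
  rewrite (k_abs_ofR KF), lc_sub, <- (v_shift_sub x) in Hlow by lra.
  pose proof (sn_sub p Hp (vsub (vadd x (vscal (kofR KF t) v)) (lc k c b))
                          (vsub x (lc k c' b))).
  lra.
Qed.

Hypothesis Hpc : continuous_fun q p.

Lemma open_inter_pball U y r : is_open q U -> is_open q (fun z => U z /\ p (vsub z y) < r).
Proof.
  intros HU z0 [HU0 Hp0].
  destruct (HU z0 HU0) as [n1 [e1 [He1 Hb1]]].
  destruct (Hpc (vzero X) (r - p (vsub z0 y))) as [n2 [d2 [Hd2 Hc2]]]; [lra|].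
  exists (max n1 n2), (Rmin e1 d2). split; [apply Rmin_pos; auto|].
  intros z Hz. split.
  - apply Hb1. intros j Hj. eapply Rlt_le_trans. apply Hz. lia. apply Rmin_l.
  - assert (Hpz : p (vsub z z0) < r - p (vsub z0 y)).
    { specialize (Hc2 (vsub z z0)). rewrite (sn_zero p Hp), Rminus_0_r in Hc2.
      rewrite <- (Rabs_pos_eq (p (vsub z z0))) by apply (sn_ge0 p Hp). apply Hc2.
      intros j Hj. rewrite v_sub0. eapply Rlt_le_trans. apply Hz. lia. apply Rmin_r. }
    pose proof (sn_mid p Hp z z0 y). lra.
Qed.

Variable A : X -> Prop.
Hypothesis HAd : dense q A.

Lemma dense_outside_pspan (Hnt : nontrivial p) k b U : is_open q U -> (exists x, U x) ->
  exists a, A a /\ U a /\ ~ in_pspan k b a.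
Proof.
  intros HU Hne.
  destruct (open_far_point Hnt k b U HU Hne) as [y [gam [HUy [Hgam Hy]]]].
  destruct (HAd _ (open_inter_pball U y (gam / 2) HU)) as [a [HAa [HUa Hpa]]].
  { exists y. split; auto. rewrite v_subv, (sn_zero p Hp). lra. }
  exists a. repeat split; auto. intros [c Hc].
  pose proof (sn_mid p Hp y a (lc k c b)). rewrite (sn_sym p Hp y a), Hc in H.
  specialize (Hy c). lra.
Qed.

(** A countable base of nonempty open sets: the balls around the points
    f m of an enumeration of A, indexed through the Cantor pairing. *)
Definition base_set (f : nat -> X) (k : nat) : X -> Prop :=
  let (m, r) := Cantor.of_nat k in
  let (n, j) := Cantor.of_nat r in ball n (f m) (/ (INR j + 1)).

Lemma base_set_open f k : is_open q (base_set f k) /\ exists x, base_set f k x.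
Proof.
  unfold base_set. destruct (Cantor.of_nat k) as [m r]. destruct (Cantor.of_nat r) as [n j].
  split. { apply ball_open. }
  exists (f m). apply ball_center. apply Rinv_0_lt_compat. pose proof (pos_INR j). lra.
Qed.

Lemma base_set_refines f (Hf : forall x, A x -> exists m, f m = x) U :
  is_open q U -> (exists x, U x) -> exists k, forall y, base_set f k y -> U y.
Proof.
  intros HU [x Hx]. destruct (HU x Hx) as [n [eps [Heps Hball]]].
  destruct (HAd (ball n x (eps / 2)) (ball_open n x (eps / 2))) as [a [HAa Hxa]].
  { exists x. apply ball_center. lra. }
  destruct (Hf a HAa) as [m <-].
  destruct (archimed_cor1 (eps / 2)) as [N [HN HN0]]; [lra|].
  exists (Cantor.to_nat (m, Cantor.to_nat (n, pred N))).
  unfold base_set. rewrite !Cantor.cancel_of_to.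
  replace (INR (pred N) + 1) with (INR N) by (destruct N; [lia|rewrite S_INR; auto]).
  intros y Hy. apply Hball. intros j Hj.
  pose proof (sn_mid (q j) (Hq j) y (f m) x). specialize (Hy j Hj). specialize (Hxa j Hj). lra.
Qed.

(** The range of a sequence in which no term lies in S_k of its predecessors
    is p-independent: in a combination of finitely many terms, the term of
    largest index is a nonzero multiple of itself minus a combination of
    earlier terms. *)
Lemma p_independent_sequence (bb : nat -> X) :
  (forall k, ~ in_pspan k bb (bb k)) -> p_independent p (fun x => exists k, bb k = x).
Proof.
  intros Hbb n a z Hn Ha Hdist Hz.
  destruct (functional_choice (fun i k => (i < n)%nat -> bb k = a i)) as [s Hs].
  { intro i. destruct (Nat.lt_ge_cases i n) as [Hi|Hi].
    - destruct (Ha i Hi) as [k Hk]. exists k. auto.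
    - exists O. intro; lia. }
  destruct (exists_max_index s n Hn) as [i0 [Hi0 Hmax]].
  assert (Hlt : forall i, (i < n)%nat -> i <> i0 -> (s i < s i0)%nat).
  { intros i Hi Hne. specialize (Hmax i Hi). destruct (Nat.eq_dec (s i) (s i0)) as [E|E]; [|lia].
    exfalso. apply (Hdist i i0 Hi Hi0 Hne). rewrite <- (Hs i Hi), <- (Hs i0 Hi0), E. auto. }
  pose (g := fun i => if Nat.eqb i i0 then vzero X else vscal (z i) (bb (s i))).
  destruct (lc_collect bb (s i0) n g) as [c Hc].
  { intros i Hi. unfold g. destruct (Nat.eqb i i0) eqn:E; [left; auto|right].
    apply Nat.eqb_neq in E. exists (z i), (s i). split; auto. }
  assert (Hsum : vsum n (fun i => vscal (z i) (a i)) =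
                 vadd (vscal (z i0) (bb (s i0))) (lc (s i0) c bb)).
  { rewrite <- Hc, vaddC, <- (vsum_single n i0 (vscal (z i0) (bb (s i0))) Hi0), <- vsum_add.
    apply vsum_ext. intros i Hi. unfold g. rewrite <- (Hs i Hi).
    destruct (Nat.eqb i i0) eqn:E.
    - apply Nat.eqb_eq in E. subst. symmetry. apply v_add0l.
    - symmetry. apply vadd0. }
  rewrite Hsum, (scal_add_lc _ _ _ _ _ (Hz i0 Hi0)), (sn_scal p Hp).
  intro H0. apply Rmult_integral in H0. destruct H0 as [H0|H0].
  - apply (Hz i0 Hi0), (k_abs_eq0 KF), H0.
  - apply (Hbb (s i0)). eexists. exact H0.
Qed.

Theorem dense_p_independent_subset (Hnt : nontrivial p) (HAc : countable A) :
  exists B : X -> Prop, (forall x, B x -> A x) /\ p_independent p B /\ dense q B.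
Proof.
  destruct HAc as [f Hf].
  destruct (recursive_choice (vzero X)
              (fun k g a => A a /\ base_set f k a /\ ~ in_pspan k g a)) as [bb Hbb].
  - intros k g g' a Hgg' [HA [HV Hout]]. repeat split; auto.
    intros [c Hc]. apply Hout. exists c. rewrite (lc_ext k c c g g'); auto.
  - intros k g. destruct (base_set_open f k) as [Ho Hne].
    destruct (dense_outside_pspan Hnt k g _ Ho Hne) as [a Ha]. eauto.
  - exists (fun x => exists k, bb k = x). split; [|split].
    + intros x [k <-]. apply Hbb.
    + apply p_independent_sequence. intro k. apply Hbb.
    + intros U HU Hne. destruct (base_set_refines f Hf U HU Hne) as [k Hk].
      exists (bb k). split; eauto. apply Hk, Hbb.
Qed.

End Development.

Lemma lipschitz_continuity (D : R -> R) L :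
  (forall t t', D t <= D t' + L * Rabs (t + - t')) -> forall c, continuity_pt D c.
Proof.
  intros HL c eps Heps. exists (eps / (Rabs L + 1)).
  pose proof (Rabs_pos L) as HL0. split; [apply Rdiv_lt_0_compat; lra|].
  intros x [_ Hx]. simpl in *. unfold Rdist in *.
  pose proof (HL x c) as H1. pose proof (HL c x) as H2.
  replace (x + - c) with (x - c) in H1 by ring.
  rewrite <- Rabs_Ropp in H2. replace (- (c + - x)) with (x - c) in H2 by ring.
  assert (Hb : Rabs L * Rabs (x - c) < eps).
  { pose proof (Rabs_pos (x - c)).
    apply Rle_lt_trans with ((Rabs L + 1) * Rabs (x - c)); [nra|].
    apply (Rmult_lt_reg_r (/ (Rabs L + 1))); [apply Rinv_0_lt_compat; lra|].
    rewrite (Rmult_comm (Rabs L + 1)), Rmult_assoc, Rinv_r, Rmult_1_r by lra. exact Hx. }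
  assert (L * Rabs (x - c) <= Rabs L * Rabs (x - c))
    by (apply Rmult_le_compat_r; [apply Rabs_pos | apply Rle_abs]).
  apply Rabs_def1; lra.
Qed.

(** The Heine–Borel property [k_bounded_min] for R: a Lipschitz function
    attains its minimum on [-M, M]. *)
Lemma R_bounded_min (D : R -> R) (L M : R) :
  (forall t, 0 <= D t) ->
  (forall t t', D t <= D t' + L * Rabs (t + - t')) ->
  (forall eps, 0 < eps -> exists t, Rabs t <= M /\ D t < eps) ->
  exists t, D t <= 0.
Proof.
  intros Hpos HL Hsmall.
  assert (HM : 0 <= M).
  { destruct (Hsmall 1) as [t [Ht _]]; [lra|]. pose proof (Rabs_pos t). lra. }
  destruct (continuity_ab_min D (- M) M) as [tmin [Hmin _]];
    [lra | intros; apply (lipschitz_continuity D L HL) |].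
  exists tmin. apply Rnot_lt_le. intro Hlt.
  destruct (Hsmall (D tmin) Hlt) as [t [Ht Hd]].
  assert (D tmin <= D t); [|lra].
  apply Hmin. pose proof (Rle_abs t). pose proof (Rle_abs (- t)). rewrite Rabs_Ropp in *. lra.
Qed.

Definition R_scalar_field : ScalarField RK.
Proof.
  refine {| kinv := (fun a : sc RK => Rinv a); kofR := (fun r : R => (r : sc RK)) |};
    simpl; intros; try ring.
  - lra.
  - apply Rinv_r. auto.
  - apply Rabs_R0.
  - destruct (Rcase_abs a); [rewrite Rabs_left in H|rewrite Rabs_right in H]; lra.
  - apply Rabs_pos.
  - apply Rabs_mult.
  - apply Rabs_Ropp.
  - apply Rabs_R1.
  - apply Rabs_pos_eq. auto.
  - eapply R_bounded_min; eauto.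
Defined.

Lemma Cmod_real x : Cmod (x, 0) = Rabs x.
Proof. unfold Cmod. simpl. rewrite Rmult_0_l, Rplus_0_r. apply sqrt_Rsqr_abs. Qed.

Lemma Cmod_imag x : Cmod (0, x) = Rabs x.
Proof. unfold Cmod. simpl. rewrite Rmult_0_l, Rplus_0_l. apply sqrt_Rsqr_abs. Qed.

Lemma Cmod_ge_re a b : Rabs a <= Cmod (a, b).
Proof. rewrite <- sqrt_Rsqr_abs. unfold Cmod. simpl. apply sqrt_le_1_alt. unfold Rsqr. nra. Qed.

Lemma Cmod_ge_im a b : Rabs b <= Cmod (a, b).
Proof. rewrite <- sqrt_Rsqr_abs. unfold Cmod. simpl. apply sqrt_le_1_alt. unfold Rsqr. nra. Qed.

(** The Heine–Borel property for C = R²: minimise first over the imaginary part, then over the real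
    part; the partial infimum G is again Lipschitz and takes small values. *)
Lemma C_bounded_min (D : Cplx -> R) (L M : R) :
  (forall t, 0 <= D t) ->
  (forall t t', D t <= D t' + L * Cmod (Cadd t (Copp t'))) ->
  (forall eps, 0 < eps -> exists t, Cmod t <= M /\ D t < eps) ->
  exists t, D t <= 0.
Proof.
  intros Hpos HL Hsmall.
  assert (HG : forall t1, exists m, (forall x, (exists t2, Rabs t2 <= M /\ x = D (t1, t2)) -> m <= x) /\
     (forall eps, 0 < eps -> exists x, (exists t2, Rabs t2 <= M /\ x = D (t1, t2)) /\ x < m + eps) /\
     0 <= m).
  { intro t1. apply nonneg_inf_exists; [|intros x [t2 [_ ->]]; auto].
    destruct (Hsmall 1) as [[a b] [Hab _]]; [lra|].
    exists (D (t1, 0)), 0. rewrite Rabs_R0. pose proof (Cmod_ge_re a b).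
    pose proof (Rabs_pos a). split; auto. lra. }
  destruct (functional_choice _ HG) as [G HGs].
  destruct (R_bounded_min G L M) as [t1 Ht1].
  - intro t. apply HGs.
  - intros t t'. apply Rnot_lt_le. intro Hlt.
    destruct (HGs t) as [Glow _]. destruct (HGs t') as [_ [Gapp _]].
    destruct (Gapp (G t - (G t' + L * Rabs (t + - t')))) as [x [[t2 [Ht2 ->]] Hx]]; [lra|].
    assert (G t <= D (t, t2)) by (apply Glow; eauto).
    pose proof (HL (t, t2) (t', t2)) as HLt. unfold Cadd, Copp in HLt. simpl in HLt.
    rewrite Rplus_opp_r, Cmod_real in HLt. lra.
  - intros eps Heps. destruct (Hsmall eps Heps) as [[a b] [Hab Hd]].
    exists a. split; [pose proof (Cmod_ge_re a b); lra|].
    destruct (HGs a) as [Glow _]. eapply Rle_lt_trans; [|exact Hd]. apply Glow.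
    exists b. split; auto. pose proof (Cmod_ge_im a b). lra.
  - destruct (R_bounded_min (fun t2 => D (t1, t2)) L M) as [t2 Ht2].
    + auto.
    + intros t t'. pose proof (HL (t1, t) (t1, t')) as HLt. unfold Cadd, Copp in HLt.
      simpl in HLt. rewrite Rplus_opp_r, Cmod_imag in HLt. lra.
    + intros eps Heps. destruct (HGs t1) as [_ [Gapp _]].
      destruct (Gapp eps Heps) as [x [[t2 [Ht2 ->]] Hx]]. exists t2. split; auto. lra.
    + exists (t1, t2). exact Ht2.
Qed.

Lemma Cpair (a b c d : R) : a = c -> b = d -> (a, b) = (c, d).
Proof. intros; subst; auto. Qed.

Definition C_scalar_field : ScalarField CK.
Proof.
  refine {| kinv := (fun z : sc CK => (fst z / (fst z * fst z + snd z * snd z),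
                                       - snd z / (fst z * fst z + snd z * snd z)));
            kofR := (fun r : R => ((r, 0) : sc CK)) |}; simpl;
  try (intros; repeat match goal with z : Cplx |- _ => destruct z end;
       unfold Cadd, Cmul, Copp; simpl; apply Cpair; ring).
  - intro H. inversion H. lra.
  - intros [x y] H. unfold Cmul. simpl.
    assert (Hn : x * x + y * y <> 0).
    { intro E. apply H. assert (x = 0) by nra. assert (y = 0) by nra. subst. auto. }
    apply Cpair; field; auto.
  - unfold Cmod. simpl. rewrite Rmult_0_l, Rplus_0_l. apply sqrt_0.
  - intros [x y] H. unfold Cmod in H. simpl in H.
    apply sqrt_eq_0 in H; [|nra]. assert (x = 0) by nra. assert (y = 0) by nra. subst. auto.
  - intros [x y]. apply sqrt_pos.
  - intros [a b] [c d]. unfold Cmod, Cmul. simpl. rewrite <- sqrt_mult by nra. f_equal. ring.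
  - intros [a b]. unfold Cmod, Copp. simpl. f_equal. ring.
  - unfold Cmod. simpl. rewrite Rmult_0_l, Rplus_0_r, Rmult_1_l. apply sqrt_1.
  - intros r Hr. rewrite Cmod_real. apply Rabs_pos_eq. auto.
  - intros D L M H1 H2 H3. eapply C_bounded_min; eauto.
Defined.

Theorem lemma4p3 (K : Scalars) (HK : K = RK \/ K = CK)
  (X : VectorSpace K) (q : nat -> X -> R)
  (HF : is_frechet q) (Hsep : separable X q)
  (p : X -> R) (Hp : is_seminorm p) (Hpc : continuous_fun q p)
  (Hnt : nontrivial p)
  (A : X -> Prop) (HAd : dense q A) (HAc : countable A) :
  exists B : X -> Prop, (forall x, B x -> A x) /\ p_independent p B /\ dense q B.
Proof.
  destruct HF as [Hq _].
  destruct HK as [-> | ->].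
  - exact (dense_p_independent_subset RK R_scalar_field X p Hp q Hq Hpc A HAd Hnt HAc).
  - exact (dense_p_independent_subset CK C_scalar_field X p Hp q Hq Hpc A HAd Hnt HAc).
Qed.
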